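(* Let $k\ge 1$, let $\epsilon>0$, let $(\varphi_0(t))_{t\in\mathbb{N}_{\ge0}}$ be a real sequence, and let $\alpha_1,\dots,\alpha_k:\mathbb{R}\to\mathbb{R}$ be continuous, strictly increasing functions with $\alpha_j(0)=0$ and $\alpha_j(r)\le r$ for all $r\ge0$. Define recursively, for $j\in\{1,\dots,k\}$ and $t\in\mathbb{N}_{\ge0}$, $$\varphi_j(t):=\varphi_{j-1}(t+1)-\varphi_{j-1}(t)+\alpha_j(\varphi_{j-1}(t)).$$ Assume $\varphi_j(0)>0$ for all $j\in\{0,\dots,k-1\}$ and $\varphi_k(t)\ge\epsilon$ for all $t\in\mathbb{N}_{\ge0}$. Then $\varphi_j(t)>0$ for all $j\in\{0,\dots,k-1\}$ and all $t\in\mathbb{N}_{\ge0}$; in particular $\varphi_0(t)>0$ for all $t$.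
   Context: In the paper this is applied with $\varphi_0(t)=a_{i,t}$, an auxiliary variable generated by an auxiliary system of relative degree $k=m+1-i$, to guarantee that $a_{i,t}$ stays positive; the sets $\mathcal{B}_{j}=\{\varphi_j>0\}$, $j=0,\dots,k-1$, are then forward invariant. *)

From Stdlib Require Import Reals Lra Lia.
Open Scope R_scope.

Fixpoint phi_seq (alpha : nat -> R -> R) (phi0 : nat -> R) (j : nat) (t : nat) : R :=
  match j with
  | O => phi0 t
  | S j' => phi_seq alpha phi0 j' (S t) - phi_seq alpha phi0 j' t
            + alpha (S j') (phi_seq alpha phi0 j' t)
  end.

(* Unfolding the recursion once gives
   phi_j(t+1) = phi_{j+1}(t) + (phi_j(t) - alpha_{j+1}(phi_j(t))),
   and the bracket is nonnegative as soon as phi_j(t) >= 0 because alpha_{j+1}(r) <= r.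
   Hence phi_j(t+1) >= phi_{j+1}(t): positivity of phi_0(t), ..., phi_k(t) at time t
   yields positivity of phi_0(t+1), ..., phi_{k-1}(t+1), and induction on t concludes,
   with phi_k(t) >= eps > 0 supplying the top level at every time. *)
From Stdlib Require Import Reals Lra Lia.
Open Scope R_scope.

Lemma phi_seq_succ_le_succ_time (alpha : nat -> R -> R) (phi0 : nat -> R) (j t : nat) :
  (forall r, 0 <= r -> alpha (S j) r <= r) ->
  0 <= phi_seq alpha phi0 j t ->
  phi_seq alpha phi0 (S j) t <= phi_seq alpha phi0 j (S t).
Proof.
  intros Halpha Hpos; simpl.
  pose proof (Halpha _ Hpos); lra.
Qed.

Lemma phi_seq_pos (alpha : nat -> R -> R) (phi0 : nat -> R) (k : nat) :
  (forall j, (j < k)%nat -> forall r, 0 <= r -> alpha (S j) r <= r) ->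
  (forall j, (j < k)%nat -> 0 < phi_seq alpha phi0 j 0) ->
  (forall t, 0 < phi_seq alpha phi0 k t) ->
  forall t j, (j < k)%nat -> 0 < phi_seq alpha phi0 j t.
Proof.
  intros Halpha Hinit Htop t; induction t as [|t IH]; intros j Hj.
  - now apply Hinit.
  - assert (Hnext : 0 < phi_seq alpha phi0 (S j) t).
    { destruct (Nat.lt_ge_cases (S j) k) as [Hlt | Hge].
      - now apply IH.
      - replace (S j) with k by lia; apply Htop. }
    pose proof (phi_seq_succ_le_succ_time alpha phi0 j t (Halpha j Hj)
                  (Rlt_le _ _ (IH j Hj))).
    lra.
Qed.

Theorem mainTheorem2 (k : nat) (eps : R) (phi0 : nat -> R) (alpha : nat -> R -> R) :
  (1 <= k)%nat ->
  0 < eps ->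
  (forall j, (1 <= j <= k)%nat -> forall x, continuity_pt (alpha j) x) ->
  (forall j, (1 <= j <= k)%nat -> forall x y, x < y -> alpha j x < alpha j y) ->
  (forall j, (1 <= j <= k)%nat -> alpha j 0 = 0) ->
  (forall j, (1 <= j <= k)%nat -> forall r, 0 <= r -> alpha j r <= r) ->
  (forall j, (j < k)%nat -> 0 < phi_seq alpha phi0 j 0) ->
  (forall t, eps <= phi_seq alpha phi0 k t) ->
  forall j t, (j < k)%nat -> 0 < phi_seq alpha phi0 j t.
Proof.
  intros _ Heps _ _ _ Hle Hinit Htop j t Hj.
  apply (phi_seq_pos alpha phi0 k); auto.
  - intros i Hi; apply Hle; lia.
  - intros s; pose proof (Htop s); lra.
Qed.
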